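(* Let $U\in\mathbb{U}_N$ and $\delta\ge0$. If at least a $2/3$ fraction of the vectors $\vec{x}\in\mathbb{Z}_4^n$ satisfy $D(U\sigma_{\vec{x}}U^\dagger,\mathcal{P}_n)\le\delta$, then $D(U\sigma_{\vec{y}}U^\dagger,\mathcal{P}_n)\le 2\delta$ for every $\vec{y}\in\mathbb{Z}_4^n$.
   Context: $n\ge1$, $N=2^n$, $\mathbb{U}_N$ the $N\times N$ unitaries. Pauli matrices $\sigma_0=I,\sigma_1=X,\sigma_2=Y,\sigma_3=Z$; for $\vec{x}\in\mathbb{Z}_4^n=\{0,1,2,3\}^n$, $\sigma_{\vec{x}}=\sigma_{x_1}\otimes\cdots\otimes\sigma_{x_n}$. Pauli group $\mathcal{P}_n=\{i^k\sigma_{\vec{x}}: k\in\{0,1,2,3\},\vec{x}\in\mathbb{Z}_4^n\}$. $\|A\|=\sqrt{\mathrm{tr}(A^\dagger A)}$; $D(A,B)=\min_{\theta\in[0,2\pi)}\frac{1}{\sqrt{2N}}\|e^{i\theta}A-B\|$; $D(A,\mathcal{S})=\inf_{B\in\mathcal{S}}D(A,B)$. *)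

From HB Require Import structures.
From mathcomp Require Import all_boot all_order all_algebra.
From mathcomp Require Import sesquilinear spectral.
Unset Printing Implicit Defensive.
Import Order.TTheory GRing.Theory Num.Theory.
Local Open Scope ring_scope.
Local Open Scope sesquilinear_scope.

Section Pauli.
Variable C : numClosedFieldType.

(* entry (r,c) (r,c in {0,1}) of sigma_a : I, X, Y, Z for a = 0,1,2,3 *)
Definition pauli1_entry (a r c : nat) : C :=
  match a with
  | 0 => if r == c then 1 else 0
  | 1 => if r == c then 0 else 1
  | 2 => if r == c then 0 else if r == 0%N then - 'i else 'i
  | _ => if r == c then (if r == 0%N then 1 else -1) else 0
  end.

Definition bit (b i : nat) : nat := odd (i %/ 2 ^ b).

(* sigma_x = sigma_{x_1} (x) ... (x) sigma_{x_n}; qubit k (0-indexed) is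
   the (n-1-k)-th binary digit of the row/column index (standard Kronecker
   ordering). *)
Definition pauli (n : nat) (x : {ffun 'I_n -> 'I_4}) : 'M[C]_(2 ^ n) :=
  \matrix_(i, j) \prod_(k < n)
     pauli1_entry (x k) (bit (n - 1 - k) i) (bit (n - 1 - k) j).

Definition pauli_group (n : nat) : pred 'M[C]_(2 ^ n) :=
  fun B => [exists k : 'I_4, exists x : {ffun 'I_n -> 'I_4},
              B == 'i ^+ k *: pauli n x].

Definition frob (m : nat) (A : 'M[C]_m) : C := sqrtC (\tr (A ^t* *m A)).

(* D(A,B) <= d, where D(A,B) = min over theta of
   ||e^{i theta} A - B|| / sqrt(2N); phases e^{i theta} are the c with |c| = 1,
   and the minimum is attained. *)
Definition distD_le (m : nat) (A B : 'M[C]_m) (d : C) : Prop :=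
  exists c : C, `|c| = 1 /\ frob m (c *: A - B) / sqrtC (2 * m%:R) <= d.

End Pauli.

(* D(A, P_n) <= d; P_n is finite so the infimum is a minimum. *)
Definition distP_le (C : numClosedFieldType) (n : nat) (A : 'M[C]_(2 ^ n)) (d : C) : Prop :=
  exists2 B, B \in pauli_group C n & distD_le C (2 ^ n) A B d.

From mathcomp Require Import all_boot all_order all_algebra.
From mathcomp Require Import sesquilinear spectral zify.
Import Order.TTheory GRing.Theory Num.Theory.
Local Open Scope ring_scope.
Local Open Scope sesquilinear_scope.

(* Fix a label y.  Multiplication of labels by y is a
   bijection of Z_4^n, so as S has density > 1/2 it contains some x together
   with x' = x.y; then sigma_x sigma_x' = i^E sigma_y.  Hence, up to the
   phase i^E, U sigma_y U^dagger is the product of the two unitaries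
   U sigma_x U^dagger and U sigma_x' U^dagger, each within delta of a Pauli
   group element P1, resp. P2.  Since the Pauli group is closed under
   products and the Frobenius norm is unitarily invariant, the distance to
   P1 P2 is at most 2 delta. *)

(* Labels 0,1,2,3 stand for I, X, Y, Z.  The label of sigma_a sigma_b is the
   Klein four-group product of a and b, and its phase is i ^+ label_phase a b
   (e.g. XY = iZ, YX = -iZ). *)
Definition label_mul (a b : nat) : nat :=
  (if a == b then 0 else if a == 0 then b else if b == 0 then a else 6 - a - b)%N.

Definition label_phase (a b : nat) : nat :=
  match a, b with
  | 1, 2 | 2, 3 | 3, 1 => 1
  | 2, 1 | 3, 2 | 1, 3 => 3
  | _, _ => 0
  end%N.

Lemma label_mul_lt (a b : nat) : (a < 4)%N -> (b < 4)%N -> (label_mul a b < 4)%N.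
Proof. by case: a => [|[|[|[|?]]]] //; case: b => [|[|[|[|?]]]]. Qed.

Lemma label_mulKl (a b : 'I_4) : label_mul (label_mul a b) b = a.
Proof. by case: a => [[|[|[|[|?]]]] ?] //; case: b => [[|[|[|[|?]]]] ?]. Qed.

Lemma label_mulKr (a b : 'I_4) : label_mul a (label_mul a b) = b.
Proof. by case: a => [[|[|[|[|?]]]] ?] //; case: b => [[|[|[|[|?]]]] ?]. Qed.

Section SingleQubit.
Variable C : numClosedFieldType.

Lemma pauli1_mul (a b : 'I_4) (r t : bool) :
  \sum_(s : bool) pauli1_entry C a r s * pauli1_entry C b s t
    = 'i ^+ label_phase a b * pauli1_entry C (label_mul a b) r t.
Proof.
have ii : ('i : C) * 'i = -1 by rewrite -expr2 sqrCi.
rewrite big_bool.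
case: a => [[|[|[|[|?]]]] ?] //; case: b => [[|[|[|[|?]]]] ?] //; case: r; case: t;
  rewrite /pauli1_entry /label_mul /label_phase /=
          ?(expr0, expr1, mul1r, mulr1, mul0r, mulr0, addr0, add0r) //.
all: by rewrite ?exprS ?expr0 ?(mulr1, mul1r, mulrN, mulNr, mulrA, ii, mulN1r, mulrN1, opprK).
Qed.

Lemma pauli1_conj (a : 'I_4) (r t : bool) :
  (pauli1_entry C a r t)^* = pauli1_entry C a t r.
Proof.
have conjNi : (- 'i : C)^* = 'i by apply: (canLR (@conjCK C)); rewrite conjCi.
by case: a => [[|[|[|[|?]]]] ?] //; case: r; case: t;
  rewrite /pauli1_entry /= ?(rmorph0, rmorph1, conjCN1, conjNi, conjCi).
Qed.

End SingleQubit.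

Definition bitb (b i : nat) : bool := odd (i %/ 2 ^ b).

Lemma bits_inj (n l1 l2 : nat) : (l1 < 2 ^ n)%N -> (l2 < 2 ^ n)%N ->
  (forall b, (b < n)%N -> bitb b l1 = bitb b l2) -> l1 = l2.
Proof.
elim: n l1 l2 => [|n IH] l1 l2.
  by rewrite expn0 !ltnS !leqn0 => /eqP -> /eqP ->.
move=> lt1 lt2 eq_bits.
have half_lt l : (l < 2 ^ n.+1)%N -> (l./2 < 2 ^ n)%N.
  by rewrite -divn2 ltn_divLR // -expnSr.
have eq_half : l1./2 = l2./2.
  apply: IH => [||b ltbn]; rewrite ?half_lt //.
  by rewrite /bitb -!divn2 -!divnMA -expnS; exact: eq_bits.
have eq_odd := eq_bits 0%N isT; rewrite /bitb expn0 !divn1 in eq_odd.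
by rewrite -(odd_double_half l1) -(odd_double_half l2) eq_odd eq_half.
Qed.

Definition bvec (n : nat) (l : 'I_(2 ^ n)) : {ffun 'I_n -> bool} :=
  [ffun k : 'I_n => bitb (n - 1 - k) l].

Lemma bvec_inj (n : nat) : injective (bvec n).
Proof.
move=> l1 l2 eq_vec; apply: val_inj; apply: (@bits_inj n); rewrite ?ltn_ord // => b ltbn.
have ltkn : (n - 1 - b < n)%N by lia.
have := congr1 (fun f : {ffun _ -> _} => f (Ordinal ltkn)) eq_vec; rewrite !ffunE /=.
by have -> : (n - 1 - (n - 1 - b) = b)%N by lia.
Qed.

Lemma bvec_bij (n : nat) : bijective (bvec n).
Proof.
apply: inj_card_bij; first exact: bvec_inj.
by rewrite card_ffun card_bool !card_ord.
Qed.

(* Summing a qubit-wise product over all indices factorizes; this is the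
   mixed-product property of Kronecker products. *)
Lemma sum_prod_bits (R : comNzRingType) (n : nat) (G : 'I_n -> bool -> R) :
  \sum_(l < 2 ^ n) \prod_(k < n) G k (bitb (n - 1 - k) l)
    = \prod_(k < n) \sum_(s : bool) G k s.
Proof.
rewrite bigA_distr_bigA /= (reindex (bvec n)) /=; last exact: onW_bij (bvec_bij n).
by apply: eq_bigr => l _; apply: eq_bigr => k _; rewrite ffunE.
Qed.

Lemma bitE (b i : nat) : bit b i = bitb b i.
Proof. by []. Qed.

Definition labels_mul {n : nat} (x z : {ffun 'I_n -> 'I_4}) : {ffun 'I_n -> 'I_4} :=
  [ffun k => inord (label_mul (x k) (z k))].

Definition labels_phase {n : nat} (x z : {ffun 'I_n -> 'I_4}) : nat :=
  \sum_(k < n) label_phase (x k) (z k).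

Lemma labels_mulE (n : nat) (x z : {ffun 'I_n -> 'I_4}) (k : 'I_n) :
  labels_mul x z k = label_mul (x k) (z k) :> nat.
Proof. by rewrite ffunE inordK // label_mul_lt. Qed.

Lemma labels_mulKl (n : nat) (x z : {ffun 'I_n -> 'I_4}) :
  labels_mul (labels_mul x z) z = x.
Proof. by apply/ffunP => k; apply: val_inj; rewrite /= !labels_mulE label_mulKl. Qed.

Lemma labels_mulKr (n : nat) (x z : {ffun 'I_n -> 'I_4}) :
  labels_mul x (labels_mul x z) = z.
Proof. by apply/ffunP => k; apply: val_inj; rewrite /= !labels_mulE label_mulKr. Qed.

Lemma labels_mulxx (n : nat) (x : {ffun 'I_n -> 'I_4}) :
  labels_mul x x = [ffun => ord0].
Proof. by apply/ffunP => k; apply: val_inj; rewrite /= labels_mulE ffunE /label_mul eqxx. Qed.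

Lemma labels_phasexx (n : nat) (x : {ffun 'I_n -> 'I_4}) : labels_phase x x = 0%N.
Proof. by apply: big1 => k _; case: (x k) => [[|[|[|[|?]]]] ?]. Qed.

Section PauliStrings.
Variables (C : numClosedFieldType) (n : nat).
Implicit Types x z : {ffun 'I_n -> 'I_4}.

Lemma pauli_mul x z :
  pauli C n x *m pauli C n z = 'i ^+ labels_phase x z *: pauli C n (labels_mul x z).
Proof.
apply/matrixP => i j; rewrite !mxE.
under eq_bigr => l _ do rewrite !mxE -big_split /=.
rewrite (@sum_prod_bits C n (fun k s =>
  pauli1_entry C (x k) (bitb (n - 1 - k) i) s * pauli1_entry C (z k) s (bitb (n - 1 - k) j))).
under eq_bigr => k _ do rewrite pauli1_mul -labels_mulE.
by rewrite big_split /= prodrXr.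
Qed.

Lemma pauli_adj x : (pauli C n x)^t* = pauli C n x.
Proof.
apply/matrixP => i j; rewrite !mxE rmorph_prod; apply: eq_bigr => k _.
exact: (pauli1_conj C (x k) (bitb _ j) (bitb _ i)).
Qed.

Lemma pauli_id : pauli C n [ffun => ord0] = 1%:M.
Proof.
apply/matrixP => i j; rewrite !mxE.
have [<-|neq_ij] := eqVneq i j; first by apply: big1 => k _; rewrite ffunE /= eqxx.
have [k neq_k] : exists k, bvec n i k != bvec n j k.
  apply/existsP; apply: contraNT neq_ij => /existsPn same.
  by apply/eqP/bvec_inj/ffunP => k; apply/eqP/negbNE/same.
rewrite (bigD1 k) //= ffunE !bitE /pauli1_entry /=.
by move: neq_k; rewrite !ffunE; case: (bitb _ i); case: (bitb _ j); rewrite //= mul0r.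
Qed.

Lemma pauli_unitary x : pauli C n x \is unitarymx.
Proof.
by apply/unitarymxP; rewrite pauli_adj pauli_mul labels_mulxx labels_phasexx scale1r pauli_id.
Qed.

End PauliStrings.

Section MatrixFacts.
Variable C : numClosedFieldType.

Lemma adjmxM (m : nat) (A B : 'M[C]_m) : (A *m B)^t* = B^t* *m A^t*.
Proof. by rewrite trmx_mul map_mxM. Qed.

Lemma adjmxZ (m : nat) (a : C) (A : 'M[C]_m) : (a *: A)^t* = a^* *: A^t*.
Proof. by apply/matrixP => i j; rewrite !mxE rmorphM. Qed.

Lemma unitarymx_adjl (m : nat) (W : 'M[C]_m) : W \is unitarymx -> W^t* *m W = 1%:M.
Proof. by rewrite -trmxC_unitary => /unitarymxP; rewrite trmxCK. Qed.

Lemma scale_unitarymx (m : nat) (c : C) (W : 'M[C]_m) :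
  `|c| = 1 -> W \is unitarymx -> c *: W \is unitarymx.
Proof.
move=> c_unit W_unitary; apply/unitarymxP.
rewrite adjmxZ -scalemxAl -scalemxAr scalerA (unitarymxP W_unitary).
by rewrite -normCK c_unit expr1n scale1r.
Qed.

Lemma conj_unitarymxM (m : nat) (U A B : 'M[C]_m) : U \is unitarymx ->
  (U *m A *m U^t*) *m (U *m B *m U^t*) = U *m (A *m B) *m U^t*.
Proof. by move=> U_unitary; rewrite !mulmxA mulmxKtV. Qed.

End MatrixFacts.

Lemma iexp_mod (C : numClosedFieldType) (k : nat) : ('i : C) ^+ k = 'i ^+ (k %% 4).
Proof.
have i4 : ('i : C) ^+ 4 = 1 by rewrite (exprM _ 2 2) sqrCi -signr_odd expr0.
by rewrite {1}(divn_eq k 4) exprD mulnC exprM i4 expr1n mul1r.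
Qed.

Lemma pauli_groupM (C : numClosedFieldType) (n : nat) (P Q : 'M[C]_(2 ^ n)) :
  P \in pauli_group C n -> Q \in pauli_group C n -> P *m Q \in pauli_group C n.
Proof.
move=> /existsP [k1 /existsP [z1 /eqP ->]] /existsP [k2 /existsP [z2 /eqP ->]].
set k := (k1 + k2 + labels_phase z1 z2)%N.
apply/existsP; exists (Ordinal (ltn_pmod k (isT : (0 < 4)%N))).
apply/existsP; exists (labels_mul z1 z2); apply/eqP.
by rewrite -scalemxAl -scalemxAr scalerA pauli_mul scalerA /= -iexp_mod !exprD.
Qed.

Lemma pauli_group_unitary (C : numClosedFieldType) (n : nat) (P : 'M[C]_(2 ^ n)) :
  P \in pauli_group C n -> P \is unitarymx.
Proof.
move=> /existsP [k /existsP [x /eqP ->]]; apply: scale_unitarymx; last exact: pauli_unitary.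
by rewrite normrX normCi expr1n.
Qed.

Section Frobenius.
Variables (C : numClosedFieldType) (m : nat).
Implicit Types X W : 'M[C]_m.

Lemma trace_adj_dot X : \tr (X^t* *m X) = dotmx (mxvec X) (mxvec X).
Proof.
rewrite dotmxE !mxE /mxtrace (reindex (uncurry (@mxvec_index m m))) /=; last first.
  exact: curry_mxvec_bij.
under eq_bigr => i _ do rewrite mxE.
rewrite exchange_big pair_bigA /=.
by apply: eq_bigr => -[i j] _ /=; rewrite !mxE mxvecE mulrC.
Qed.

Lemma frob_triangle X Y : frob C m (X + Y) <= frob C m X + frob C m Y.
Proof.
rewrite /frob !trace_adj_dot linearD /=.
exact: (triangle_lerif (@dotmx C (m * m)) (mxvec X) (mxvec Y)).
Qed.

Lemma frob_mulr X W : W \is unitarymx -> frob C m (X *m W) = frob C m X.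
Proof.
move=> W_unitary; rewrite /frob adjmxM -!mulmxA mxtrace_mulC -!mulmxA.
by rewrite (unitarymxP W_unitary) mulmx1.
Qed.

Lemma frob_mull W X : W \is unitarymx -> frob C m (W *m X) = frob C m X.
Proof.
move=> W_unitary; rewrite /frob adjmxM -!mulmxA [W^t* *m (W *m X)]mulmxA.
by rewrite unitarymx_adjl // mul1mx.
Qed.

End Frobenius.

Section Distance.
Variables (C : numClosedFieldType) (m : nat).
Implicit Types A B P Q : 'M[C]_m.

Lemma distD_phase (c : C) A P (d : C) :
  `|c| = 1 -> distD_le C m (c *: A) P d -> distD_le C m A P d.
Proof.
move=> c_unit [c' [c'_unit close]]; exists (c' * c); split.
  by rewrite normrM c'_unit c_unit mulr1.
by rewrite -scalerA.
Qed.

(* Subadditivity of D under products: with A and Q unitary,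
   c1c2 AB - PQ = (c1 A)(c2 B - Q) + (c1 A - P) Q. *)
Lemma distD_mul A B P Q (d1 d2 : C) :
  A \is unitarymx -> Q \is unitarymx ->
  distD_le C m A P d1 -> distD_le C m B Q d2 ->
  distD_le C m (A *m B) (P *m Q) (d1 + d2).
Proof.
move=> A_unitary Q_unitary [c1 [c1_unit close1]] [c2 [c2_unit close2]].
exists (c1 * c2); split; first by rewrite normrM c1_unit c2_unit mulr1.
have split_diff : (c1 * c2) *: (A *m B) - P *m Q
    = (c1 *: A) *m (c2 *: B - Q) + (c1 *: A - P) *m Q.
  by rewrite mulmxBr mulmxBl addrA subrK -scalemxAl -scalemxAr scalerA.
have cA_unitary : c1 *: A \is unitarymx by exact: scale_unitarymx.
have := frob_triangle C m ((c1 *: A) *m (c2 *: B - Q)) ((c1 *: A - P) *m Q).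
rewrite -split_diff frob_mull // frob_mulr // => tri.
apply: le_trans (ler_wpM2r _ tri) _; first by rewrite invr_ge0 sqrtC_ge0 mulr_ge0 ?ler0n.
by rewrite mulrDl addrC lerD.
Qed.

End Distance.

Lemma dense_meets_image {T : finType} {f : T -> T} (S : {set T}) :
  injective f -> (#|T| < 2 * #|S|)%N -> exists2 x, x \in S & f x \in S.
Proof.
move=> f_inj dense.
have card_union := cardsUI S (f @: S); rewrite card_imset // in card_union.
have union_le : (#|S :|: f @: S| <= #|T|)%N by apply: max_card.
have [meet0|[y]] := set_0Vmem (S :&: f @: S).
  by rewrite meet0 cards0 in card_union; lia.
by rewrite inE => /andP [Sy /imsetP [x Sx fx]]; exists x; rewrite // -fx.
Qed.

Theorem lemma5 (C : numClosedFieldType) (n : nat) (hn : (1 <= n)%N)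
  (U : 'M[C]_(2 ^ n)) (hU : U \is unitarymx) (delta : C) (hdelta : 0 <= delta) :
  (exists S : {set {ffun 'I_n -> 'I_4}},
     (3 * #|S| >= 2 * 4 ^ n)%N /\
     forall x, x \in S -> distP_le C n (U *m pauli C n x *m (U ^t*)) delta) ->
  forall y : {ffun 'I_n -> 'I_4},
    distP_le C n (U *m pauli C n y *m (U ^t*)) (2 * delta).
Proof.
move=> [S [dense close]] y.
have mul_y_inj : injective (labels_mul^~ y).
  by apply: (can_inj (g := labels_mul^~ y)) => z; apply: labels_mulKl.
have [|x Sx Sxy] := dense_meets_image S mul_y_inj.
  by rewrite card_ffun !card_ord; have := expn_gt0 4 n; lia.
set x' := labels_mul x y in Sxy.
have [P1 P1_pauli close1] := close x Sx.
have [P2 P2_pauli close2] := close x' Sxy.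
have conj_unitary z : U *m pauli C n z *m U^t* \is unitarymx.
  by rewrite !mul_unitarymx ?trmxC_unitary ?pauli_unitary.
exists (P1 *m P2); first exact: pauli_groupM.
apply: (@distD_phase _ _ ('i ^+ labels_phase x x')); first by rewrite normrX normCi expr1n.
have -> : 'i ^+ labels_phase x x' *: (U *m pauli C n y *m U^t*)
    = (U *m pauli C n x *m U^t*) *m (U *m pauli C n x' *m U^t*).
  by rewrite conj_unitarymxM // pauli_mul labels_mulKr -scalemxAr -scalemxAl.
have -> : 2 * delta = delta + delta by rewrite mulr_natl mulr2n.
apply: distD_mul => //; exact: pauli_group_unitary.
Qed.
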